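(* Let $\mathcal G$ be a core network with input nodes $\iota_1,\dots,\iota_n$ and output node $o$, fix $m$, and let $\mathcal D_m$ be the vestigial subnetwork with respect to $\iota_m$ (assumed nonempty). Let $D_{m,j}$ be one of the diagonal blocks of the Frobenius–König normal form of $J_{\mathcal D_m}$ and let $\mathcal D_{m,j}$ be the subnetwork of $\mathcal D_m$ associated to $D_{m,j}$. Then: (a) nodes in $\mathcal D_{m,j}$ are not $\mathcal D_m$-path equivalent to any node in $\mathcal D_m\setminus\mathcal D_{m,j}$; (b) $\mathcal D_{m,j}$ is a path component of $\mathcal D_m$.
   Context: Setting: $\mathcal G$ is a finite directed graph with input nodes $\iota_1,\dots,\iota_n$ and output node $o$; node $b$ is downstream from $a$ (and $a$ upstream from $b$) if there is a directed path from $a$ to $b$ (every node is up/downstream from itself). $\mathcal G$ is a core network if every node is upstream from $o$ and downstream from at least one input node. $\mathcal G_m$ is the subnetwork of nodes downstream from $\iota_m$ and upstream from $o$; the vestigial subnetwork $\mathcal D_m$ consists of the nodes of $\mathcal G$ not in $\mathcal G_m$ (i.e. not downstream from $\iota_m$) with all arrows of $\mathcal G$ between them. Each node $j$ carries a function $f_j$ and the partial derivatives $f_{j,x_\ell}$, one for each arrow $\ell\to j$ and one self-coupling $f_{j,x_j}$ for every node, are regarded as independent indeterminates; for a set of nodes $\mathcal K$, $J_{\mathcal K}=(f_{j,x_\ell})_{j,\ell\in\mathcal K}$ (entries $0$ where there is no arrow). By Frobenius–König theory there are permutation matrices $P_m,Q_m$ with $P_mJ_{\mathcal D_m}Q_m$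 block upper triangular with square fully indecomposable diagonal blocks $D_{m,1},\dots,D_{m,n_m}$, each with irreducible determinant. Each block $D_{m,j}$ of order $k_j$ contains exactly $k_j$ self-couplings, and after permuting rows and columns it equals $J_{\mathcal D_{m,j}}$ for the set $\mathcal D_{m,j}$ of nodes indexing its rows; $\mathcal D_{m,j}$ (with all arrows between its nodes) is the subnetwork associated to $D_{m,j}$. For a subnetwork $\mathcal K$, nodes $a,b$ are $\mathcal K$-path equivalent if there are directed paths within $\mathcal K$ from $a$ to $b$ and from $b$ to $a$; a $\mathcal K$-path component is an equivalence class. *)

From mathcomp Require Import all_boot.
Set Implicit Arguments. Unset Strict Implicit. Unset Printing Implicit Defensive.

(* Inputs [iota : 'I_n -> V], output [o : V].
   b is downstream from a iff [connect arrow a b] (reflexive). *)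

Definition core_network (V : finType) (arrow : rel V) (n : nat)
  (iota : 'I_n -> V) (o : V) : Prop :=
  forall v : V, connect arrow v o /\ exists i : 'I_n, connect arrow (iota i) v.

Definition Gsub (V : finType) (arrow : rel V) (n : nat)
  (iota : 'I_n -> V) (o : V) (m : 'I_n) : {set V} :=
  [set v | connect arrow (iota m) v && connect arrow v o].

Definition vestigial (V : finType) (arrow : rel V) (n : nat)
  (iota : 'I_n -> V) (o : V) (m : 'I_n) : {set V} :=
  ~: Gsub arrow iota o m.

(* Zero pattern of the Jacobian: the entry in row j, column l is the
   indeterminate f_{j,x_l}, present iff j = l (self-coupling) or there is
   an arrow l -> j; otherwise it is 0. *)
Definition jac_nz (V : finType) (arrow : rel V) (j l : V) : bool :=
  (j == l) || arrow l j.

(* The square submatrix of J with row set R and column set C (entries are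
   independent indeterminates or 0) is fully indecomposable:
   order k = #|R| = #|C| >= 1; if k = 1 the entry is nonzero; if k >= 2
   there is no s x (k - s) zero submatrix with 1 <= s <= k - 1. *)
Definition fully_indecomposable (V : finType) (arrow : rel V)
  (R C : {set V}) : Prop :=
  #|R| = #|C| /\
  ((#|R| = 1 /\ exists r c, [/\ r \in R, c \in C & jac_nz arrow r c]) \/
   (2 <= #|R| /\
    forall S T : {set V}, S \subset R -> T \subset C ->
      0 < #|S| < #|R| -> #|S| + #|T| = #|R| ->
      exists r c, [/\ r \in S, c \in T & jac_nz arrow r c])).

Definition row_block (V : finType) (D : {set V}) (t : nat)
  (rb : V -> 'I_t) (i : 'I_t) : {set V} := [set x in D | rb x == i].

(* Frobenius-Konig normal form of J_D: P J_D Q is block upper triangular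
   with t square fully indecomposable diagonal blocks D_1, ..., D_t.
   Permutations P, Q are recorded by the block each row (rb) and each
   column (cb) is sent to; the order inside a block is irrelevant.
   Block upper triangular: the entry (r, c) is 0 whenever the row block of
   r comes after the column block of c. *)
Definition FK_normal_form (V : finType) (arrow : rel V) (D : {set V})
  (t : nat) (rb cb : V -> 'I_t) : Prop :=
  (forall i : 'I_t,
     fully_indecomposable arrow (row_block D rb i) (row_block D cb i)) /\
  (forall r c, r \in D -> c \in D -> jac_nz arrow r c -> rb r <= cb c).

Definition path_in (V : finType) (arrow : rel V) (K : {set V}) (a b : V)
  : bool :=
  [&& a \in K, b \in K &
      connect [rel x y | [&& x \in K, y \in K & arrow x y]] a b].

Definition path_equiv (V : finType) (arrow : rel V) (K : {set V}) (a b : V)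
  : bool := path_in arrow K a b && path_in arrow K b a.

Definition path_component (V : finType) (arrow : rel V) (K P : {set V})
  : Prop :=
  exists2 a, a \in K & P = [set b in K | path_equiv arrow K a b].

From mathcomp Require Import all_boot.
Set Implicit Arguments. Unset Strict Implicit. Unset Printing Implicit Defensive.

(* The diagonal blocks are square, so the row-block and column-block indices
   have the same sum over D_m; since every self-coupling lies on or above the
   block diagonal, each node then has equal row and column block index.
   Hence an arrow c -> r inside D_m forces block(r) <= block(c): the block
   index cannot increase along a path, so path-equivalent nodes share a block.
   Conversely a fully indecomposable block containing all its self-couplings
   is strongly connected: the nodes reaching a fixed node would otherwise
   index the rows of a zero submatrix of complementary size. *)

Section Blocks.

Variables (V : finType) (D : {set V}) (t : nat).

Lemma sum_block_index (f : V -> 'I_t) :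
  \sum_(x in D) (f x : nat) = \sum_(i < t) #|row_block D f i| * i.
Proof.
rewrite (partition_big f xpredT) //=; apply: eq_bigr => i _.
rewrite (eq_bigr (fun _ => val i)); last by move=> x /andP[_ /eqP->].
by rewrite sum_nat_const; congr (_ * _); apply: eq_card => x; rewrite !inE.
Qed.

Lemma block_index_eq (rb cb : V -> 'I_t) :
  {in D, forall x, rb x <= cb x} ->
  (forall i, #|row_block D rb i| = #|row_block D cb i|) ->
  {in D, rb =1 cb}.
Proof.
move=> le_rc card_rc.
have sum_rc : \sum_(x in D) (cb x : nat)
            = \sum_(x in D) (rb x : nat) + \sum_(x in D) (cb x - rb x).
  by rewrite -big_split /=; apply: eq_bigr => x xD; rewrite subnKC ?le_rc.
have : \sum_(x in D) (cb x - rb x) == 0.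
  rewrite -(eqn_add2l (\sum_(x in D) (rb x : nat))) addn0 -sum_rc.
  by rewrite !sum_block_index; apply/eqP/eq_bigr => i _; rewrite card_rc.
rewrite sum_nat_eq0 => /forall_inP diff0 x xD.
by apply/val_inj/eqP; rewrite eqn_leq le_rc // -subn_eq0 diff0.
Qed.

End Blocks.

Section Paths.

Variables (V : finType) (arrow : rel V).

Definition arrow_in (K : {set V}) : rel V :=
  [rel x y | [&& x \in K, y \in K & arrow x y]].

Lemma path_inE (K : {set V}) a b :
  path_in arrow K a b = [&& a \in K, b \in K & connect (arrow_in K) a b].
Proof. by []. Qed.

Lemma path_in_sub (K1 K2 : {set V}) a b :
  K1 \subset K2 -> path_in arrow K1 a b -> path_in arrow K2 a b.
Proof.
move=> /subsetP sK; rewrite !path_inE => /and3P[/sK -> /sK -> ab] /=.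
apply: connect_sub ab => x y /and3P[/sK xK /sK yK xy].
by apply: connect1; apply/and3P.
Qed.

Lemma fully_indecomposable_gt0 (R C : {set V}) :
  fully_indecomposable arrow R C -> 0 < #|R|.
Proof. by case=> _ [[-> _] | [le2R _]] //; apply: ltnW. Qed.

Lemma fully_indecomposable_path_in (R : {set V}) a b :
  fully_indecomposable arrow R R -> a \in R -> b \in R -> path_in arrow R b a.
Proof.
move=> [_ FI] aR bR; rewrite path_inE aR bR /=; apply/negPn/negP => nba.
pose S := [set x in R | connect (arrow_in R) x a].
have SR : S \subset R by apply/subsetP => x /setIdP[].
have S_gt0 : 0 < #|S| by apply/card_gt0P; exists a; rewrite inE aR connect0.
have ltSR : #|S| < #|R|.
  by apply/proper_card/properP; split=> //; exists b; rewrite // inE bR.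
have cardSR : #|S| + #|R :\: S| = #|R|.
  by rewrite -(cardsID S R) (setIidPr SR).
case: FI => [[R1 _] | [_ FI]]; first by move: ltSR S_gt0; rewrite R1 ltnS leqn0 => /eqP->.
have [r [c [/setIdP[rR ra] /setDP[cR cS] rc]]] :=
  FI S (R :\: S) SR (subsetDl _ _) (introT andP (conj S_gt0 ltSR)) cardSR.
case/orP: rc => [/eqP rc | cr]; first by rewrite -rc inE rR ra in cS.
move: cS; rewrite inE cR /=; apply/negP/negPn.
by apply: connect_trans ra; apply: connect1; apply/and3P.
Qed.

End Paths.

Section FrobeniusKoenig.

Variables (V : finType) (arrow : rel V) (D : {set V}) (t : nat).
Variables (rb cb : V -> 'I_t).
Hypothesis FK : FK_normal_form arrow D rb cb.

Lemma FK_row_col_block : {in D, rb =1 cb}.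
Proof.
case: FK => FI UT; apply: block_index_eq.
  by move=> x xD; apply: UT; rewrite // /jac_nz eqxx.
by move=> i; case: (FI i).
Qed.

Lemma FK_row_block_arrow r c :
  r \in D -> c \in D -> arrow c r -> rb r <= rb c.
Proof.
move=> rD cD cr; rewrite [rb c]FK_row_col_block //.
by case: FK => _; apply; rewrite // /jac_nz cr orbT.
Qed.

Lemma FK_row_block_path a b : path_in arrow D a b -> rb b <= rb a.
Proof.
rewrite path_inE => /and3P[_ _ /connectP[p]].
elim: p a => [|y p IHp] a /=; first by move=> _ ->.
case/andP=> /and3P[aD yD ay] yp b_last.
exact: leq_trans (IHp y yp b_last) (FK_row_block_arrow yD aD ay).
Qed.

Lemma FK_path_equiv_block a b : path_equiv arrow D a b -> rb a = rb b.
Proof.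
case/andP=> ab ba; apply/val_inj/eqP.
by rewrite eqn_leq !FK_row_block_path.
Qed.

Lemma FK_row_block_not_path_equiv (j : 'I_t) a b :
  a \in row_block D rb j -> b \in D :\: row_block D rb j ->
  ~~ path_equiv arrow D a b.
Proof.
case/setIdP=> _ /eqP raj /setDP[bD]; rewrite inE bD /= => /eqP rbj.
by apply/negP => /FK_path_equiv_block rab; apply: rbj; rewrite -rab.
Qed.

Lemma FK_row_block_fully_indecomposable (j : 'I_t) :
  fully_indecomposable arrow (row_block D rb j) (row_block D rb j).
Proof.
rewrite {2}(_ : row_block D rb j = row_block D cb j); first by case: FK.
by apply/setP => x; rewrite !inE; apply/andb_id2l => xD; rewrite FK_row_col_block.
Qed.

Lemma FK_row_block_path_component (j : 'I_t) :
  path_component arrow D (row_block D rb j).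
Proof.
have FIj := FK_row_block_fully_indecomposable j.
have sjD : row_block D rb j \subset D by apply/subsetP => x /setIdP[].
have [a aj] := card_gt0P (fully_indecomposable_gt0 FIj).
exists a; first exact: subsetP aj.
apply/setP => b; rewrite inE; have [bj | bnj] := boolP (b \in row_block D rb j).
  rewrite (subsetP sjD) //=; apply/esym/andP.
  by split; apply: path_in_sub sjD _; apply: fully_indecomposable_path_in.
case bD: (b \in D) => //=; apply/esym/negbTE.
by apply: FK_row_block_not_path_equiv aj _; rewrite inE bnj.
Qed.

End FrobeniusKoenig.

Theorem theorem3p7 (V : finType) (arrow : rel V) (n : nat)
  (iota : 'I_n -> V) (o : V) (m : 'I_n) :
  core_network arrow iota o ->
  vestigial arrow iota o m != set0 ->
  forall (t : nat) (rb cb : V -> 'I_t),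
  FK_normal_form arrow (vestigial arrow iota o m) rb cb ->
  forall j : 'I_t,
  let Dm := vestigial arrow iota o m in
  let Dmj := row_block Dm rb j in
  (forall a b, a \in Dmj -> b \in Dm :\: Dmj -> ~~ path_equiv arrow Dm a b) /\
  path_component arrow Dm Dmj.
Proof.
move=> _ _ t rb cb FK j Dm Dmj; split.
  exact: FK_row_block_not_path_equiv FK j.
exact: FK_row_block_path_component FK j.
Qed.
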